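(* Let $\lambda$ be a strict partition and $c$ an integer with $1\le c<\ell(\lambda)$. Then the expected number of horizontal adjacencies lying in column $c$ of a uniformly random shifted standard Young tableau of shape $[\lambda]^{\mathrm{sh}}$ equals $1$.
   Context: For strict $\lambda=(\lambda_1>\dots>\lambda_\ell>0)$, $[\lambda]^{\mathrm{sh}}=\{(i,j+i-1):i\in[\ell],j\in[\lambda_i]\}$ (row $i$, column $j$). A shifted standard Young tableau is a bijection $T:[\lambda]^{\mathrm{sh}}\to[|\lambda|]$ increasing along rows and columns. For $u=(i,j)$, $(T,u)$ is a horizontal adjacency if $(i,j+1)\in[\lambda]^{\mathrm{sh}}$ and $T(i,j+1)=T(u)+1$; it lies in column $j$. *)

From HB Require Import structures.
From mathcomp Require Import all_boot all_order all_algebra.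
Set Implicit Arguments. Unset Strict Implicit. Unset Printing Implicit Defensive.
Import Order.TTheory GRing.Theory Num.Theory.

(* A strict partition: a strictly decreasing list of positive integers
   la = [:: la_1; ...; la_l].  Rows and columns are 1-based. *)
Definition strict_partition (la : seq nat) : bool :=
  sorted (fun x y => y < x) la && all (fun x => 0 < x) la.

(* (i, j) is in the shifted diagram [la]^sh = {(i, k+i-1) : i in [l], k in [la_i]},
   i.e. 1 <= i <= l and i <= j <= la_i + i - 1. *)
Definition in_shape_nat (la : seq nat) (i j : nat) : bool :=
  [&& 1 <= i, i <= size la, i <= j & j < nth 0 la i.-1 + i].

(* Every cell of [la]^sh has both coordinates <= |la|, so cells are encoded
   inside 'I_(|la|+1) x 'I_(|la|+1). *)
Definition cell (la : seq nat) := ('I_(sumn la).+1 * 'I_(sumn la).+1)%type.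

Definition in_shape (la : seq nat) (u : cell la) : bool := in_shape_nat la u.1 u.2.

Definition Tv (la : seq nat) (T : {ffun cell la -> 'I_(sumn la).+1}) (i j : nat) : nat :=
  val (T (inord i, inord j)).

(* T is a shifted standard Young tableau of shape la: restricted to [la]^sh it is
   a bijection onto [|la|] = {1..|la|}, increasing along rows and columns; outside
   the shape it is 0 (normalisation so that tableaux are in bijection with such T). *)
Definition is_shifted_SYT (la : seq nat) (T : {ffun cell la -> 'I_(sumn la).+1}) : bool :=
  [&& [forall u, ~~ in_shape u ==> (val (T u) == 0)],
      [forall u, in_shape u ==> (0 < val (T u))],
      [forall u, forall v, [&& in_shape u, in_shape v & T u == T v] ==> (u == v)],
      [forall k : 'I_(sumn la).+1, (0 < val k) ==> [exists u, in_shape u && (T u == k)]],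
      [forall u, forall v, [&& in_shape u, in_shape v, u.1 == v.1 & (val u.2 < val v.2)]
                            ==> (val (T u) < val (T v))] &
      [forall u, forall v, [&& in_shape u, in_shape v, u.2 == v.2 & (val u.1 < val v.1)]
                            ==> (val (T u) < val (T v))]].

Definition shifted_SYTs (la : seq nat) : {set {ffun cell la -> 'I_(sumn la).+1}} :=
  [set T | is_shifted_SYT T].

Definition horiz_adj (la : seq nat) (T : {ffun cell la -> 'I_(sumn la).+1}) (u : cell la) : bool :=
  [&& in_shape u, in_shape_nat la u.1 (val u.2).+1 &
      Tv T u.1 (val u.2).+1 == (val (T u)).+1].

Definition num_hadj_col (la : seq nat) (T : {ffun cell la -> 'I_(sumn la).+1}) (c : nat) : nat :=
  #|[set u : cell la | (val u.2 == c) && horiz_adj T u]|.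

From HB Require Import structures.
From mathcomp Require Import all_boot all_order all_algebra.
From mathcomp Require Import fingroup perm zify.
Import Order.TTheory GRing.Theory Num.Theory.
Set Implicit Arguments. Unset Strict Implicit. Unset Printing Implicit Defensive.

(* Read the entries 1, ..., n of a tableau in order and call k a right (left)
   crossing if k lies in a column <= c and k+1 in a column > c (or vice versa).
   Entry 1 sits in column 1 and entry n at the end of a row, in a column >= l > c,
   so every tableau has exactly one more right crossing than left crossings.
   A horizontal adjacency in column c is a right crossing.  At any other right
   crossing, and at any left crossing, the cells of k and k+1 share neither a row
   nor a column, so exchanging the two entries is again a tableau; this exchange
   is an involution swapping the non-adjacent right crossings with the left
   crossings.  Summing over all tableaux, the adjacencies in column c are exactly
   as many as the tableaux. *)

Lemma sum_nat_bool_card (I : finType) (P : pred I) : \sum_(i : I) (P i : nat) = #|P|.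
Proof.
rewrite -sum1_card [RHS]big_mkcond; apply: eq_bigr => i _.
by rewrite unfold_in; case: (P i).
Qed.

Lemma sum_sum_nat_bool_card (I J : finType) (A : {set I}) (P : I -> J -> bool) :
  \sum_(i in A) \sum_(j : J) (P i j : nat) = #|[set p : I * J | (p.1 \in A) && P p.1 p.2]|.
Proof.
rewrite (eq_bigr (fun i => \sum_(j | P i j) 1)); last by move=> i _; rewrite sum1_card -sum_nat_bool_card.
by rewrite pair_big_dep /= sum1_card; apply: eq_card => p; rewrite inE.
Qed.

Lemma card_involution (T : finType) (f : T -> T) (A B : {set T}) : involutive f ->
  f @: A \subset B -> f @: B \subset A -> #|A| = #|B|.
Proof.
move=> fK fAB fBA; have f_inj := can_inj fK.
by apply/eqP; rewrite eqn_leq -{1}(card_imset A f_inj) -{2}(card_imset B f_inj) !subset_leq_card.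
Qed.

Lemma sum_bool_changes (b : nat -> bool) m : 0 < m ->
  \sum_(k < m) [&& 0 < k, b k & ~~ b k.+1] + b m = \sum_(k < m) [&& 0 < k, ~~ b k & b k.+1] + b 1.
Proof.
elim: m => [//|[|m] IH] _; first by rewrite !big_ord1.
by rewrite !(big_ord_recr m.+1) /=; have := IH isT; case: (b m.+1); case: (b m.+2) => /=; lia.
Qed.

Lemma sumn_take_le (s : seq nat) i : sumn (take i s) <= sumn s.
Proof. by rewrite -{2}(cat_take_drop i s) sumn_cat leq_addr. Qed.

Lemma nth_add_le_sumn (la : seq nat) i :
  all (fun x => 0 < x) la -> i < size la -> nth 0 la i + i <= sumn la.
Proof.
elim: la i => [//|a l IH] [|i] /= /andP[a0 l_gt0]; first by rewrite addn0 leq_addr.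
by move=> /(IH i l_gt0); lia.
Qed.

Lemma in_shape_nat_le_sumn (la : seq nat) i j : all (fun x => 0 < x) la ->
  in_shape_nat la i j -> (i <= sumn la) && (j <= sumn la).
Proof.
move=> la_gt0 /and4P[i1 il ij jl].
by have := nth_add_le_sumn (i := i.-1) la_gt0; lia.
Qed.

Section StrictPartition.
Variable la : seq nat.
Hypothesis la_strict : strict_partition la.

Lemma strict_partition_gt0 : all (fun x => 0 < x) la.
Proof. by case/andP: la_strict. Qed.

Lemma strict_partition_nth_gt0 i : i < size la -> 0 < nth 0 la i.
Proof. by move=> i_lt; apply: (allP strict_partition_gt0); exact: mem_nth. Qed.

Lemma strict_partition_nth_ltn i : i.+1 < size la -> nth 0 la i.+1 < nth 0 la i.
Proof.
case/andP: la_strict => + _; elim: la i => [//|a l IH] [|i] /= la_sorted.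
  by case: l la_sorted {IH} => [//|b l] /= /andP[].
by move=> i_lt; apply: IH (path_sorted la_sorted) _.
Qed.

Lemma size_le_nth_add i : i < size la -> size la <= nth 0 la i + i.
Proof.
move=> i_lt; have [m lt_m] := ubnP (size la - i); elim: m i lt_m i_lt => [//|m IH] i m_gt i_lt.
case: (ltnP i.+1 (size la)) => [i1_lt|]; last by have := strict_partition_nth_gt0 i_lt; lia.
have := IH i.+1 ltac:(lia) i1_lt; have := strict_partition_nth_ltn i1_lt; lia.
Qed.

Lemma strict_partition_sumn_gt0 : 0 < size la -> 0 < sumn la.
Proof.
move=> la_nil; have := strict_partition_nth_gt0 la_nil.
by have := nth_add_le_sumn strict_partition_gt0 la_nil; lia.
Qed.

End StrictPartition.

Definition mkcell (la : seq nat) (i j : nat) : cell la := (inord i, inord j).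

Lemma mkcell_val (la : seq nat) (u : cell la) : mkcell la u.1 u.2 = u.
Proof. by case: u => a b; rewrite /mkcell /= !inord_val. Qed.

Lemma mkcellP (la : seq nat) i j : all (fun x => 0 < x) la -> in_shape_nat la i j ->
  [/\ in_shape (mkcell la i j), nat_of_ord (mkcell la i j).1 = i
    & nat_of_ord (mkcell la i j).2 = j].
Proof.
move=> la_gt0 ij_in; have /andP[i_le j_le] := in_shape_nat_le_sumn la_gt0 ij_in.
by rewrite /in_shape /mkcell /= !inordK //; lia.
Qed.

Lemma shifted_SYT_intro (la : seq nat) (T : {ffun cell la -> 'I_(sumn la).+1}) :
  (forall u, ~~ in_shape u -> nat_of_ord (T u) = 0) ->
  (forall u, in_shape u -> 0 < nat_of_ord (T u)) ->
  (forall u v, in_shape u -> in_shape v -> T u = T v -> u = v) ->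
  (forall k : 'I_(sumn la).+1, 0 < nat_of_ord k -> exists2 u, in_shape u & T u = k) ->
  (forall u v, in_shape u -> in_shape v -> u.1 = v.1 -> nat_of_ord u.2 < v.2 ->
     nat_of_ord (T u) < T v) ->
  (forall u v, in_shape u -> in_shape v -> u.2 = v.2 -> nat_of_ord u.1 < v.1 ->
     nat_of_ord (T u) < T v) ->
  is_shifted_SYT T.
Proof.
move=> T_out T_gt0 T_inj T_surj T_row T_col; apply/and5P; split.
- by apply/forallP=> u; apply/implyP=> /T_out/eqP.
- by apply/forallP=> u; apply/implyP=> /T_gt0.
- apply/forallP=> u; apply/forallP=> v; apply/implyP=> /and3P[u_in v_in /eqP].
  by move=> /(T_inj u v u_in v_in)->.
- apply/forallP=> k; apply/implyP=> /T_surj[u u_in Tu].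
  by apply/existsP; exists u; rewrite u_in Tu eqxx.
- apply/andP; split; apply/forallP=> u; apply/forallP=> v.
  + by apply/implyP=> /and4P[u_in v_in /eqP]; exact: T_row.
  + by apply/implyP=> /and4P[u_in v_in /eqP]; exact: T_col.
Qed.

Section ShiftedTableau.
Variables (la : seq nat) (T : {ffun cell la -> 'I_(sumn la).+1}).
Hypothesis T_syt : is_shifted_SYT T.

Let T_props := and5P T_syt.

Lemma syt_out u : ~~ in_shape u -> nat_of_ord (T u) = 0.
Proof. by case: T_props => /forallP/(_ u)/implyP + _ _ _ _ => T_out /T_out/eqP. Qed.

Lemma syt_gt0 u : in_shape u -> 0 < nat_of_ord (T u).
Proof. by case: T_props => _ /forallP/(_ u)/implyP. Qed.

Lemma syt_inj u v : in_shape u -> in_shape v -> T u = T v -> u = v.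
Proof.
move=> u_in v_in Tuv; case: T_props => _ _ /forallP/(_ u)/forallP/(_ v) + _ _.
by rewrite u_in v_in Tuv eqxx => /eqP->.
Qed.

Lemma syt_val_inj u v : in_shape u -> in_shape v ->
  nat_of_ord (T u) = T v -> u = v.
Proof. by move=> u_in v_in /val_inj; exact: syt_inj. Qed.

Lemma syt_row_lt u v : in_shape u -> in_shape v -> u.1 = v.1 ->
  nat_of_ord u.2 < v.2 -> nat_of_ord (T u) < T v.
Proof.
move=> u_in v_in uv1 uv2; case: T_props => _ _ _ _ /andP[/forallP/(_ u)/forallP/(_ v) + _].
by rewrite u_in v_in uv1 eqxx uv2 => /implyP; apply.
Qed.

Lemma syt_col_lt u v : in_shape u -> in_shape v -> u.2 = v.2 ->
  nat_of_ord u.1 < v.1 -> nat_of_ord (T u) < T v.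
Proof.
move=> u_in v_in uv2 uv1; case: T_props => _ _ _ _ /andP[_ /forallP/(_ u)/forallP/(_ v)].
by rewrite u_in v_in uv2 eqxx uv1 => /implyP; apply.
Qed.

Lemma syt_entryP k : 0 < k <= sumn la -> exists2 u, in_shape u & nat_of_ord (T u) = k.
Proof.
move=> /andP[k_gt0 k_le]; have k_val : val (inord k : 'I_(sumn la).+1) = k by rewrite /= inordK.
case: T_props => _ _ _ /forallP/(_ (inord k)) + _; rewrite k_val k_gt0 /=.
by case/existsP=> u /andP[u_in /eqP Tu]; exists u; rewrite // Tu.
Qed.

Hypothesis la_gt0 : all (fun x => 0 < x) la.

Lemma syt_row_succ u v : in_shape u -> in_shape v -> u.1 = v.1 ->
  nat_of_ord u.2 < v.2 -> nat_of_ord (T v) = (T u).+1 -> nat_of_ord v.2 = u.2.+1.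
Proof.
move=> u_in v_in uv1 uv2 Tuv; apply/eqP; rewrite eqn_leq uv2 andbT leqNgt.
apply/negP=> u2_lt.
have w_in : in_shape_nat la u.1 u.2.+1.
  by case/and4P: u_in => *; case/and4P: v_in; rewrite -uv1 => *; apply/and4P; split; lia.
have [w_shape w1 w2] := mkcellP la_gt0 w_in.
have := syt_row_lt u_in w_shape (ord_inj (esym w1)) ltac:(by rewrite w2).
have := syt_row_lt w_shape v_in (etrans (ord_inj w1) uv1) ltac:(by rewrite w2).
lia.
Qed.

End ShiftedTableau.

Section SwapSucc.
Variable n : nat.

Definition swapn (k x : nat) := if x == k then k.+1 else if x == k.+1 then k else x.

Definition swap_succ (k : 'I_n) : {perm 'I_n.+1} :=
  tperm (widen_ord (leqnSn n) k) (inord k.+1).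

Lemma swap_succE k x : nat_of_ord (swap_succ k x) = swapn k x.
Proof.
have k1_val : nat_of_ord (inord k.+1 : 'I_n.+1) = k.+1 by rewrite inordK ?ltnS.
rewrite /swap_succ /swapn; case: tpermP => [->|->|x_neq_k x_neq_k1] /=.
- by rewrite eqxx k1_val.
- by rewrite k1_val eqxx; case: eqP => //; lia.
- case: eqP => [x_k|_]; first by case: x_neq_k; apply: ord_inj.
  by case: eqP => [x_k1|//]; case: x_neq_k1; apply: ord_inj; rewrite x_k1 k1_val.
Qed.

Lemma swapn_eq k x : (swapn k x == k) = (x == k.+1).
Proof. by rewrite /swapn; case: (x =P k); case: (x =P k.+1) => *; apply/eqP/eqP; lia. Qed.

Lemma swapn_eqS k x : (swapn k x == k.+1) = (x == k).
Proof. by rewrite /swapn; case: (x =P k); case: (x =P k.+1) => *; apply/eqP/eqP; lia. Qed.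

Lemma swapn_eq0 k x : 0 < k -> (swapn k x == 0) = (x == 0).
Proof. by rewrite /swapn; case: (x =P k); case: (x =P k.+1) => *; apply/eqP/eqP; lia. Qed.

Lemma swapn_ltn k x y : x < y -> ~ (x = k /\ y = k.+1) -> swapn k x < swapn k y.
Proof. by rewrite /swapn; case: (x =P k); case: (x =P k.+1); case: (y =P k); case: (y =P k.+1); lia. Qed.

End SwapSucc.

Section SwapTableau.
Variable la : seq nat.
Local Notation tableau := {ffun cell la -> 'I_(sumn la).+1}.

Definition swap_tableau (T : tableau) (k : 'I_(sumn la)) : tableau :=
  [ffun u => swap_succ k (T u)].

Lemma swap_tableauE T k u : nat_of_ord (swap_tableau T k u) = swapn k (T u).
Proof. by rewrite ffunE swap_succE. Qed.

Lemma swap_tableauK (k : 'I_(sumn la)) : involutive (swap_tableau ^~ k).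
Proof. by move=> T; apply/ffunP=> u; rewrite !ffunE tpermK. Qed.

Lemma swap_tableau_syt T (k : 'I_(sumn la)) : is_shifted_SYT T -> 0 < k ->
  (forall u v, in_shape u -> in_shape v -> nat_of_ord (T u) = k ->
     nat_of_ord (T v) = k.+1 -> u.1 <> v.1 /\ u.2 <> v.2) ->
  is_shifted_SYT (swap_tableau T k).
Proof.
move=> T_syt k_gt0 k_apart; apply: shifted_SYT_intro.
- by move=> u u_out; apply/eqP; rewrite swap_tableauE swapn_eq0 // (syt_out T_syt u_out).
- move=> u u_in; rewrite swap_tableauE lt0n swapn_eq0 // -lt0n; exact: syt_gt0.
- by move=> u v u_in v_in; rewrite !ffunE => /perm_inj; exact: syt_inj.
- move=> m m_gt0.
  have Tm_gt0 : 0 < nat_of_ord (swap_succ k m) by rewrite swap_succE lt0n swapn_eq0 // -lt0n.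
  have [|u u_in Tu] := syt_entryP T_syt (k := swap_succ k m); first by rewrite Tm_gt0 /= -ltnS ltn_ord.
  by exists u; rewrite // ffunE (val_inj Tu) tpermK.
- move=> u v u_in v_in uv1 uv2; rewrite !swap_tableauE; apply: swapn_ltn.
    exact: syt_row_lt.
  by case=> Tu Tv; have [] := k_apart u v u_in v_in Tu Tv.
- move=> u v u_in v_in uv2 uv1; rewrite !swap_tableauE; apply: swapn_ltn.
    exact: syt_col_lt.
  by case=> Tu Tv; have [] := k_apart u v u_in v_in Tu Tv.
Qed.

End SwapTableau.

Section StrictTableau.
Variables (la : seq nat) (T : {ffun cell la -> 'I_(sumn la).+1}).
Hypotheses (la_strict : strict_partition la) (T_syt : is_shifted_SYT T).
Let la_gt0 := strict_partition_gt0 la_strict.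

Lemma syt_entry1_col u : in_shape u -> nat_of_ord (T u) = 1 -> nat_of_ord u.2 = 1.
Proof.
move=> u_in Tu; have /and4P[i1 il ij jl] := u_in.
have Tu_min w : in_shape w -> ~ nat_of_ord (T w) < T u.
  by move=> w_in; rewrite Tu; have := syt_gt0 T_syt w_in; lia.
have u2 : nat_of_ord u.2 = u.1.
  apply/eqP; rewrite eqn_leq ij andbT leqNgt; apply/negP=> u1_lt.
  have /mkcellP[//|w_in w1 w2] : in_shape_nat la u.1 u.2.-1 by apply/and4P; split; lia.
  by apply: Tu_min w_in (syt_row_lt T_syt w_in u_in (ord_inj w1) _); rewrite w2; lia.
suff : nat_of_ord u.1 = 1 by lia.
apply/eqP; rewrite eqn_leq i1 andbT leqNgt; apply/negP=> u1_gt.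
have := strict_partition_nth_ltn la_strict (i := u.1.-2) ltac:(lia).
have := strict_partition_nth_gt0 la_strict (i := u.1.-1) ltac:(lia).
rewrite (_ : u.1.-2.+1 = u.1.-1); last by lia.
move=> nth_gt0 nth_lt.
(* the cell above u exists because rows strictly shrink *)
have /mkcellP[//|w_in w1 w2] : in_shape_nat la u.1.-1 u.1 by apply/and4P; split; lia.
apply: Tu_min w_in (syt_col_lt T_syt w_in u_in _ _); last by rewrite w1; lia.
by apply: ord_inj; rewrite w2 u2.
Qed.

Lemma syt_max_col u : in_shape u -> nat_of_ord (T u) = sumn la -> size la <= u.2.
Proof.
move=> u_in Tu; have /and4P[i1 il ij jl] := u_in.
have := size_le_nth_add la_strict (i := u.1.-1) ltac:(lia).
case w_in : (in_shape_nat la u.1 u.2.+1).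
  have [w_shape w1 w2] := mkcellP la_gt0 w_in.
  have := syt_row_lt T_syt u_in w_shape (esym (ord_inj w1)) ltac:(by rewrite w2).
  by have := ltn_ord (T (mkcell la u.1 u.2.+1)); lia.
by move: w_in; rewrite /in_shape_nat i1 il (leqW ij) /= => /negbT; rewrite -leqNgt; lia.
Qed.

End StrictTableau.

Section ColumnCrossings.
Variables (la : seq nat) (c : nat).
Local Notation n := (sumn la).
Local Notation tableau := {ffun cell la -> 'I_(sumn la).+1}.
Hypothesis la_strict : strict_partition la.
Let la_gt0 := strict_partition_gt0 la_strict.

Definition entry_le_col (T : tableau) (k : nat) :=
  [exists u : cell la, [&& in_shape u, nat_of_ord (T u) == k & u.2 <= c]].

Definition cross_right (T : tableau) (k : nat) :=
  [&& 0 < k, entry_le_col T k & ~~ entry_le_col T k.+1].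

Definition cross_left (T : tableau) (k : nat) :=
  [&& 0 < k, ~~ entry_le_col T k & entry_le_col T k.+1].

Definition hadj_at (T : tableau) (k : nat) :=
  [exists u : cell la, [&& nat_of_ord u.2 == c, horiz_adj T u & nat_of_ord (T u) == k]].

Lemma entry_le_colE T u k : is_shifted_SYT T -> in_shape u -> nat_of_ord (T u) = k ->
  entry_le_col T k = (u.2 <= c).
Proof.
move=> T_syt u_in Tu; apply/existsP/idP=> [[v /and3P[v_in /eqP Tv]]|u_le].
  by rewrite -(syt_val_inj T_syt u_in v_in) // Tu Tv.
by exists u; rewrite u_in Tu eqxx.
Qed.

Lemma horiz_adjP (T : tableau) u : reflect
  [/\ in_shape u, in_shape_nat la u.1 u.2.+1
    & nat_of_ord (T (mkcell la u.1 u.2.+1)) = (T u).+1]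
  (horiz_adj T u).
Proof. by apply: (iffP and3P) => -[? ? /eqP]. Qed.

Lemma cross_left_swap T (k : 'I_n) : cross_left (swap_tableau T k) k = cross_right T k.
Proof.
have swap_k : entry_le_col (swap_tableau T k) k = entry_le_col T k.+1.
  by apply: eq_existsb => u; rewrite swap_tableauE swapn_eq.
have swap_k1 : entry_le_col (swap_tableau T k) k.+1 = entry_le_col T k.
  by apply: eq_existsb => u; rewrite swap_tableauE swapn_eqS.
by rewrite /cross_left /cross_right swap_k swap_k1 (andbC (~~ _)).
Qed.

Lemma hadj_at_swap T (k : 'I_n) : is_shifted_SYT T -> ~~ hadj_at (swap_tableau T k) k.
Proof.
move=> T_syt; apply/negP=> /existsP[u /and3P[_ /horiz_adjP[u_in w_in Tw] Tu]].
rewrite swap_tableauE swapn_eq in Tu; rewrite !swap_tableauE in Tw.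
have Tw_k : nat_of_ord (T (mkcell la u.1 u.2.+1)) = k.
  apply/eqP; rewrite -swapn_eqS Tw; apply/eqP; congr _.+1; apply/eqP.
  by rewrite swapn_eq.
have [w_shape w1 w2] := mkcellP la_gt0 w_in.
have := syt_row_lt T_syt u_in w_shape (esym (ord_inj w1)) ltac:(by rewrite w2).
by rewrite Tw_k (eqP Tu) ltnNge leqnSn.
Qed.

Lemma hadj_at_cross_right T k : is_shifted_SYT T -> hadj_at T k -> cross_right T k.
Proof.
move=> T_syt /existsP[u /and3P[/eqP u2 /horiz_adjP[u_in w_in Tw] /eqP Tu]].
have [w_shape w1 w2] := mkcellP la_gt0 w_in.
rewrite Tu in Tw; apply/and3P; split.
- by rewrite -Tu; exact: syt_gt0.
- by rewrite (entry_le_colE T_syt u_in Tu) u2.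
- by rewrite (entry_le_colE T_syt w_shape Tw) w2 u2 ltnn.
Qed.

Lemma cross_right_swap_syt T (k : 'I_n) : is_shifted_SYT T ->
  cross_right T k -> ~~ hadj_at T k -> is_shifted_SYT (swap_tableau T k).
Proof.
move=> T_syt /and3P[k_gt0 k_le k1_gt] no_adj.
apply: swap_tableau_syt => // u v u_in v_in Tu Tv.
rewrite (entry_le_colE T_syt u_in Tu) in k_le.
rewrite (entry_le_colE T_syt v_in Tv) -ltnNge in k1_gt.
split=> [uv1|uv2]; last by move: k_le; rewrite uv2; lia.
have v2 := syt_row_succ T_syt la_gt0 u_in v_in uv1 ltac:(lia) ltac:(by rewrite Tv Tu).
case/negP: no_adj; apply/existsP; exists u.
have -> : nat_of_ord u.2 = c by lia.
rewrite eqxx Tu eqxx andbT /=; apply/horiz_adjP; split=> //.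
  by rewrite uv1 -v2.
by rewrite uv1 -v2 mkcell_val Tv Tu.
Qed.

Lemma cross_left_swap_syt T (k : 'I_n) : is_shifted_SYT T ->
  cross_left T k -> is_shifted_SYT (swap_tableau T k).
Proof.
move=> T_syt /and3P[k_gt0 k_gt k1_le]; apply: swap_tableau_syt => // u v u_in v_in Tu Tv.
rewrite (entry_le_colE T_syt u_in Tu) -ltnNge in k_gt.
rewrite (entry_le_colE T_syt v_in Tv) in k1_le.
split=> [uv1|uv2]; last by move: k_gt; rewrite uv2; lia.
by have := syt_row_lt T_syt v_in u_in (esym uv1) ltac:(lia); lia.
Qed.

Hypotheses (c_gt0 : 0 < c) (c_lt : c < size la).

Lemma sum_cross_right T : is_shifted_SYT T ->
  \sum_(k < n) cross_right T k = \sum_(k < n) cross_left T k + 1.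
Proof.
move=> T_syt; have n_gt0 := strict_partition_sumn_gt0 la_strict (leq_ltn_trans (leq0n c) c_lt).
have [|u1 u1_in Tu1] := syt_entryP T_syt (k := 1); first by rewrite n_gt0.
have [|un un_in Tun] := syt_entryP T_syt (k := n); first by rewrite n_gt0 leqnn.
have := sum_bool_changes (entry_le_col T) n_gt0.
rewrite (entry_le_colE T_syt u1_in Tu1) (syt_entry1_col la_strict T_syt u1_in Tu1) c_gt0.
rewrite (entry_le_colE T_syt un_in Tun) leqNgt (leq_trans c_lt (syt_max_col la_strict T_syt un_in Tun)).
by rewrite addn0.
Qed.

Lemma num_hadj_colE T : is_shifted_SYT T -> num_hadj_col T c = \sum_(k < n) hadj_at T k.
Proof.
move=> T_syt; rewrite sum_nat_bool_card /num_hadj_col.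
set A := [set u : cell la | _].
have Tu_lt u : u \in A -> nat_of_ord (T u) < n.
  rewrite inE => /andP[_ /horiz_adjP[_ _ Tw]].
  by have := ltn_ord (T (mkcell la u.1 u.2.+1)); rewrite Tw.
have T_inj : {in A &, injective T}.
  move=> u v; rewrite !inE => /andP[_ /horiz_adjP[u_in _ _]] /andP[_ /horiz_adjP[v_in _ _]].
  exact: syt_inj.
have widen_inj : injective (widen_ord (leqnSn n)).
  by move=> i j eq_ij; apply: val_inj; exact: (congr1 val eq_ij).
rewrite -(card_in_imset T_inj) -(card_imset _ widen_inj); apply: eq_card => x.
apply/imsetP/imsetP=> [[u uA ->]|[k /existsP[u /and3P[/eqP u2 u_adj /eqP Tu]] ->]].
  exists (Ordinal (Tu_lt u uA)); last exact: val_inj.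
  have := uA; rewrite inE => /andP[u2 u_adj].
  by apply/existsP; exists u; rewrite u_adj eqxx !andbT.
by exists u; [rewrite inE u_adj andbT; apply/eqP | apply: val_inj].
Qed.

Lemma sum_cross_right_nonadj :
  \sum_(T in shifted_SYTs la) \sum_(k < n) (cross_right T k && ~~ hadj_at T k) =
  \sum_(T in shifted_SYTs la) \sum_(k < n) cross_left T k.
Proof.
rewrite !sum_sum_nat_bool_card.
apply: (card_involution (f := fun p => (swap_tableau p.1 p.2, p.2))).
- by case=> T k; rewrite /= swap_tableauK.
- apply/subsetP=> _ /imsetP[[T k] + ->]; rewrite !inE /= => /andP[T_syt /andP[k_right no_adj]].
  by rewrite cross_left_swap k_right andbT; exact: cross_right_swap_syt.
- apply/subsetP=> _ /imsetP[[T k] + ->]; rewrite !inE /= => /andP[T_syt k_left].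
  rewrite -cross_left_swap swap_tableauK k_left hadj_at_swap //.
  by rewrite (cross_left_swap_syt T_syt k_left).
Qed.

Lemma sum_num_hadj_col :
  \sum_(T in shifted_SYTs la) num_hadj_col T c = #|shifted_SYTs la|.
Proof.
have sum_hadj : \sum_(T in shifted_SYTs la) num_hadj_col T c =
    \sum_(T in shifted_SYTs la) \sum_(k < n) hadj_at T k.
  by apply: eq_bigr => T; rewrite inE => /num_hadj_colE.
have sum_cross_split : \sum_(T in shifted_SYTs la) \sum_(k < n) cross_right T k =
    \sum_(T in shifted_SYTs la) \sum_(k < n) hadj_at T k +
    \sum_(T in shifted_SYTs la) \sum_(k < n) (cross_right T k && ~~ hadj_at T k).
  rewrite -big_split; apply: eq_bigr => T; rewrite inE => T_syt.
  rewrite -big_split; apply: eq_bigr => k _.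
  by case: (boolP (hadj_at T k)) => [/(hadj_at_cross_right T_syt)->|]; case: cross_right.
have sum_cross_diff : \sum_(T in shifted_SYTs la) \sum_(k < n) cross_right T k =
    \sum_(T in shifted_SYTs la) \sum_(k < n) cross_left T k + #|shifted_SYTs la|.
  by rewrite -sum1_card -big_split; apply: eq_bigr => T; rewrite inE => /sum_cross_right.
by move: sum_cross_split sum_cross_diff; rewrite sum_hadj sum_cross_right_nonadj; lia.
Qed.

End ColumnCrossings.

Section RowReading.
Variable la : seq nat.
Hypothesis la_gt0 : all (fun x => 0 < x) la.
Local Notation n := (sumn la).
Local Notation row_start i := (sumn (take i la)).

Lemma row_start_succ i : i < size la -> row_start i.+1 = row_start i + nth 0 la i.
Proof. by move=> i_lt; rewrite (take_nth 0 i_lt) sumn_rcons. Qed.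

Lemma row_start_mono i i' : i <= i' -> row_start i <= row_start i'.
Proof. by move=> le_ii'; rewrite -(take_takel la le_ii'); exact: sumn_take_le. Qed.

Definition row_reading (i j : nat) := row_start i.-1 + (j - i).+1.

Lemma row_reading_bounds i j : in_shape_nat la i j ->
  row_start i.-1 < row_reading i j <= row_start i.
Proof.
case/and4P=> i1 il ij jl; rewrite /row_reading.
by have := row_start_succ (i := i.-1) ltac:(lia); rewrite prednK //; lia.
Qed.

Lemma row_reading_lt i j i' j' : in_shape_nat la i j -> in_shape_nat la i' j' ->
  i < i' -> row_reading i j < row_reading i' j'.
Proof.
move=> ij_in ij_in' lt_ii'; have := row_reading_bounds ij_in; have := row_reading_bounds ij_in'.
by have := row_start_mono (i := i) (i' := i'.-1) ltac:(lia); lia.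
Qed.

Lemma row_readingP k : 0 < k <= n ->
  exists i j, in_shape_nat la i j /\ row_reading i j = k.
Proof.
case/andP=> k_gt0 k_le.
have k_reached : exists i, k <= row_start i by exists (size la); rewrite take_size.
case: (ex_minnP k_reached) => i k_le_i i_min.
have i_gt0 : 0 < i by case: i k_le_i {i_min} => //; rewrite take0 /=; lia.
have i_le : i <= size la by apply: i_min; rewrite take_size.
have k_gt : row_start i.-1 < k by rewrite ltnNge; apply/negP=> /i_min; lia.
have := row_start_succ (i := i.-1) ltac:(lia); rewrite prednK // => row_i.
exists i, (k - row_start i.-1 + i.-1); split; first by apply/and4P; split; lia.
by rewrite /row_reading; lia.
Qed.

Definition row_reading_tableau : {ffun cell la -> 'I_n.+1} :=
  [ffun u => if in_shape u then inord (row_reading u.1 u.2) else ord0].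

Lemma row_reading_tableauE u : in_shape u ->
  nat_of_ord (row_reading_tableau u) = row_reading u.1 u.2.
Proof.
move=> u_in; rewrite ffunE u_in inordK // ltnS.
by case/andP: (row_reading_bounds u_in) => _ /leq_trans; apply; exact: sumn_take_le.
Qed.

Lemma row_reading_tableau_syt : is_shifted_SYT row_reading_tableau.
Proof.
apply: shifted_SYT_intro.
- by move=> u u_out; rewrite ffunE (negbTE u_out).
- by move=> u u_in; rewrite row_reading_tableauE // /row_reading addnS.
- move=> u v u_in v_in /(congr1 val); rewrite /= !row_reading_tableauE //.
  case: (ltngtP u.1 v.1) => [lt_uv|lt_vu|eq_uv1].
  + by have := row_reading_lt u_in v_in lt_uv; lia.
  + by have := row_reading_lt v_in u_in lt_vu; lia.
  rewrite /row_reading eq_uv1 => eq_uv2.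
  have /and4P[_ _ u_le _] := u_in; have /and4P[_ _ v_le _] := v_in.
  rewrite [u]surjective_pairing [v]surjective_pairing (val_inj eq_uv1).
  by congr pair; apply: ord_inj; rewrite eq_uv1 in u_le; lia.
- move=> k k_gt0; have [|i [j [ij_in ij_val]]] := row_readingP (k := k).
    by rewrite k_gt0 -ltnS ltn_ord.
  have [u_in u1 u2] := mkcellP la_gt0 ij_in.
  by exists (mkcell la i j) => //; apply: ord_inj; rewrite row_reading_tableauE // u1 u2.
- move=> u v u_in v_in uv1 uv2; rewrite !row_reading_tableauE // /row_reading uv1.
  by case/and4P: u_in; rewrite uv1; lia.
- by move=> u v u_in v_in _ uv1; rewrite !row_reading_tableauE //; exact: row_reading_lt.
Qed.

End RowReading.

Unset Implicit Arguments.
Local Open Scope ring_scope.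

Theorem mainTheorem14 (la : seq nat) (c : nat) :
  strict_partition la -> (1 <= c)%N -> (c < size la)%N ->
  (\sum_(T in shifted_SYTs la) (num_hadj_col T c)%:R) / (#|shifted_SYTs la|%:R) = 1 :> rat.
Proof.
move=> la_strict c_gt0 c_lt.
have syt_exists : row_reading_tableau la \in shifted_SYTs la.
  by rewrite inE; apply: row_reading_tableau_syt; exact: strict_partition_gt0.
rewrite -natr_sum sum_num_hadj_col // divff // pnatr_eq0 -lt0n card_gt0.
by apply/set0Pn; exists (row_reading_tableau la).
Qed.
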